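(* For every discrete group $G$ and every normalized 2-cocycle $\sigma$ on $G$, $M_0A(G,\sigma)=M_0A(G)$, and for $\varphi$ in this set the cb-norm $\|M_\varphi\|_{cb}$ computed on $C^*_r(G,\sigma)$ does not depend on $\sigma$. More precisely, for $\varphi:G\to\mathbb{C}$, one has $\varphi\in M_0A(G,\sigma)$ if and only if the kernel $K_\varphi(s,t)=\varphi(st^{-1})$ is a Schur multiplier on $B(\ell^2(G))$, and then $\|M_\varphi\|_{cb}=\|S_{K_\varphi}\|$.
   Context: $\sigma:G\times G\to\mathbb{T}$ is a normalized 2-cocycle ($\sigma(g,h)\sigma(gh,k)=\sigma(h,k)\sigma(g,hk)$, $\sigma(g,e)=\sigma(e,g)=1$); $\Lambda_\sigma(g)$ is the unitary on $\ell^2(G)$ with $(\Lambda_\sigma(g)\xi)(h)=\sigma(g,g^{-1}h)\xi(g^{-1}h)$; $C^*_r(G,\sigma)$ is the operator-norm closure of $\mathbb{C}(G,\sigma)=\mathrm{span}\,\Lambda_\sigma(G)$. For $\varphi:G\to\mathbb{C}$, $M_\varphi:\mathbb{C}(G,\sigma)\to\mathbb{C}(G,\sigma)$ is the linear map with $M_\varphi(\Lambda_\sigma(g))=\varphi(g)\Lambda_\sigma(g)$; $\varphi\in MA(G,\sigma)$ (a $\sigma$-multiplier) if $M_\varphi$ is bounded in operator norm, in which case $M_\varphi$ also denotes its extension to $C^*_r(G,\sigma)$. $M_0A(G,\sigma)$ is the set of $\varphi\in MA(G,\sigma)$ with $M_\varphi$ completely bounded, with norm $\|\varphi\|_{cb}=\|M_\varphi\|_{cb}$;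 $M_0A(G)=M_0A(G,1)$. A kernel $K:G\times G\to\mathbb{C}$ is a Schur multiplier if for every $A\in B(\ell^2(G))$ with matrix $[A(s,t)]$ in the canonical basis, $[K(s,t)A(s,t)]$ is the matrix of a bounded operator $S_K(A)$; $S_K$ is then a bounded map on $B(\ell^2(G))$. *)

From mathcomp Require Import all_boot all_order all_algebra.
From mathcomp Require Import complex.
From mathcomp Require Import classical_sets reals constructive_ereal ereal.
Set Implicit Arguments. Unset Strict Implicit. Unset Printing Implicit Defensive.
Import Order.TTheory GRing.Theory Num.Theory.
Local Open Scope ring_scope.
Local Open Scope complex_scope.

Section TwistedMultipliers.
Variable R : realType.
Local Notation C := R[i].

Definition is_group (G : eqType) (mul : G -> G -> G) (inv : G -> G) (e : G) :=
  [/\ forall x y z, mul x (mul y z) = mul (mul x y) z,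
      forall x, mul e x = x, forall x, mul x e = x,
      forall x, mul (inv x) x = e & forall x, mul x (inv x) = e].

Variables (G : eqType) (mul : G -> G -> G) (inv : G -> G) (e : G).

Definition is_norm_cocycle (sigma : G -> G -> C) :=
  [/\ forall g h, `|sigma g h| = 1,
      forall g h k, sigma g h * sigma (mul g h) k = sigma h k * sigma g (mul h k),
      forall g, sigma g e = 1 & forall g, sigma e g = 1].

Definition trivial_cocycle : G -> G -> C := fun _ _ => 1.

(* Matrix of Lambda_sigma(g) in the canonical basis of l^2(G):
   <Lambda_sigma(g) delta_t, delta_s> = sigma(g,t) if s = g t, else 0. *)
Definition lam_entry (sigma : G -> G -> C) (g s t : G) : C :=
  if s == mul g t then sigma g t else 0.

(* An element of C(G,sigma) given as a finite linear combination
   sum_p p.1 Lambda_sigma(p.2). *)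
Definition tgelt := seq (C * G).

Definition tg_entry (sigma : G -> G -> C) (x : tgelt) (s t : G) : C :=
  \sum_(p <- x) p.1 * lam_entry sigma p.2 s t.

Definition Mphi (phi : G -> C) (x : tgelt) : tgelt :=
  [seq (phi p.2 * p.1, p.2) | p <- x].

(* An n x n block matrix of G x G matrices, i.e. a matrix indexed by
   ('I_n x G), is (the matrix of) an operator on l^2(G)^n of norm <= c:
   tested against all finitely supported vectors. *)
Definition mx_bounded_by (n : nat) (A : 'I_n -> 'I_n -> G -> G -> C) (c : R) :=
  forall (S : seq G), uniq S -> forall xi eta : 'I_n -> G -> C,
    `| \sum_(i < n) \sum_(j < n) \sum_(s <- S) \sum_(t <- S)
         eta i s * A i j s t * xi j t | ^+ 2
    <= (c ^+ 2)%:C * (\sum_(j < n) \sum_(t <- S) `|xi j t| ^+ 2)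
                   * (\sum_(i < n) \sum_(s <- S) `|eta i s| ^+ 2).

Definition bounded_by (A : G -> G -> C) (c : R) :=
  forall (S : seq G), uniq S -> forall xi eta : G -> C,
    `| \sum_(s <- S) \sum_(t <- S) eta s * A s t * xi t | ^+ 2
    <= (c ^+ 2)%:C * (\sum_(t <- S) `|xi t| ^+ 2) * (\sum_(s <- S) `|eta s| ^+ 2).

Definition MA (sigma : G -> G -> C) (phi : G -> C) :=
  exists c : R, forall (x : tgelt) (d : R),
    bounded_by (tg_entry sigma x) d -> bounded_by (tg_entry sigma (Mphi phi x)) (c * d).

Definition cb_bound (sigma : G -> G -> C) (phi : G -> C) (c : R) :=
  0 <= c /\
  forall (n : nat) (X : 'I_n -> 'I_n -> tgelt) (d : R),
    mx_bounded_by (fun i j => tg_entry sigma (X i j)) d ->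
    mx_bounded_by (fun i j => tg_entry sigma (Mphi phi (X i j))) (c * d).

Definition M0A (sigma : G -> G -> C) (phi : G -> C) :=
  MA sigma phi /\ exists c, cb_bound sigma phi c.

Definition cb_norm (sigma : G -> G -> C) (phi : G -> C) : \bar R :=
  ereal_inf [set (c%:E)%E | c in cb_bound sigma phi].

Definition schur_mult (K : G -> G -> C) (A : G -> G -> C) : G -> G -> C :=
  fun s t => K s t * A s t.

Definition schur_bound (K : G -> G -> C) (c : R) :=
  0 <= c /\ forall (A : G -> G -> C) (d : R),
    bounded_by A d -> bounded_by (schur_mult K A) (c * d).

Definition is_schur_multiplier (K : G -> G -> C) := exists c, schur_bound K c.

Definition schur_norm (K : G -> G -> C) : \bar R :=
  ereal_inf [set (c%:E)%E | c in schur_bound K].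

Definition K_of (phi : G -> C) : G -> G -> C := fun s t => phi (mul s (inv t)).

End TwistedMultipliers.

(* If [K_phi] is a Schur multiplier,
   then so is its amplification to block matrices (pair a block matrix with block vectors,
   normalise by their pointwise l2-norms, and apply the scalar bound); since the matrix of
   [M_phi x] is the Schur product of [K_phi] with that of [x], [M_phi] is completely bounded.
   Conversely, a finite section [(A (s_i, s_j))] of a bounded matrix [A] is realised as the
   [(s_i, s_j)] entries of the block matrix [(c_ij Lambda_sigma(s_i s_j^-1))_(i,j)] with
   unimodular [c_ij]; by the cocycle identity this block matrix is, after the change of
   variables [u = s_i w], a direct sum over [w] of copies of the section, hence no larger
   than [A], and evaluating [id (x) M_phi] on it at those entries yields [K_phi o A]. So the
   cb-bounds of [M_phi] are exactly the Schur bounds of [K_phi], whatever [sigma]. *)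

From mathcomp Require Import all_boot all_order all_algebra.
From mathcomp Require Import complex.
From mathcomp Require Import boolp classical_sets reals constructive_ereal ereal.
From mathcomp Require Import ring lra.
Set Implicit Arguments. Unset Strict Implicit. Unset Printing Implicit Defensive.
Import Order.TTheory GRing.Theory Num.Theory.
Local Open Scope complex_scope.
Local Open Scope ring_scope.

Lemma big_pick (V : nmodType) (T : eqType) (S : seq T) (a : T) (F : T -> V) :
  uniq S -> \sum_(u <- S) (if u == a then F u else 0) = if a \in S then F a else 0.
Proof.
move=> uS; case: ifP => aS.
  rewrite (big_rem a) //= eqxx big1_seq ?addr0 // => u /andP[_ uin].
  by case: eqP uin => // ->; rewrite mem_rem_uniqF.
by rewrite big1_seq // => u /andP[_ uin]; case: eqP uin => // ->; rewrite aS.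
Qed.

Lemma exchange_big_pair (V : nmodType) (I J U W : Type)
    (rI : seq I) (rJ : seq J) (rU : seq U) (rW : seq W) (F : U -> W -> I -> J -> V) :
  \sum_(s <- rU) \sum_(t <- rW) \sum_(i <- rI) \sum_(j <- rJ) F s t i j =
  \sum_(i <- rI) \sum_(j <- rJ) \sum_(s <- rU) \sum_(t <- rW) F s t i j.
Proof.
under eq_bigr => s _ do rewrite exchange_big /=.
under eq_bigr => s _ do under eq_bigr => i _ do rewrite exchange_big /=.
by rewrite exchange_big /=; apply: eq_bigr => i _; rewrite exchange_big.
Qed.

Lemma big_pick2 (V : nmodType) (T : eqType) (S : seq T) (a b : T) (F : T -> T -> V) :
  uniq S -> a \in S -> b \in S ->
  \sum_(u <- S) \sum_(v <- S) (if u == a then (if v == b then F u v else 0) else 0) = F a b.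
Proof.
move=> uS aS bS.
rewrite (eq_bigr (fun u => if u == a then \sum_(v <- S) (if v == b then F u v else 0) else 0));
  last by move=> u _; case: eqP => // _; rewrite big1.
by rewrite big_pick // aS big_pick // bS.
Qed.

Lemma big_seq_nth (V : nmodType) (T : Type) (x0 : T) (S : seq T) (F : T -> V) :
  \sum_(s <- S) F s = \sum_(i < size S) F (nth x0 S i).
Proof. by rewrite (big_nth x0) big_mkord. Qed.

Section CauchySchwarz.
Variable R : realType.

(* Termwise [a_w^2 <= D p_w q_w] sums up, since [2 a_w a_v <= D (p_w q_v + p_v q_w)] by AM-GM. *)
Lemma sqr_sum_le_mul_sum (I : Type) (W : seq I) (a p q : I -> R) (D : R) :
  0 <= D -> (forall w, [/\ 0 <= a w, 0 <= p w & 0 <= q w]) ->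
  (forall w, a w ^+ 2 <= D * p w * q w) ->
  (\sum_(w <- W) a w) ^+ 2 <= D * (\sum_(w <- W) p w) * (\sum_(w <- W) q w).
Proof.
move=> D0 hpos hb; elim: W => [|w W IH]; first by rewrite !big_nil expr0n /= mulr0.
rewrite !big_cons.
set A := \sum_(w <- W) a w in IH *; set P := \sum_(w <- W) p w in IH *.
set Q := \sum_(w <- W) q w in IH *.
have [a0 p0 q0] := hpos w; have hw := hb w.
have A0 : 0 <= A by apply: sumr_ge0 => i _; case: (hpos i).
have P0 : 0 <= P by apply: sumr_ge0 => i _; case: (hpos i).
have Q0 : 0 <= Q by apply: sumr_ge0 => i _; case: (hpos i).
have prod_le : (a w * A) ^+ 2 <= (D * p w * q w) * (D * P * Q).
  by rewrite exprMn; apply: ler_pM; rewrite ?sqr_ge0.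
have amgm : 4 * ((D * p w * q w) * (D * P * Q)) <= (D * (p w * Q + P * q w)) ^+ 2.
  have sq0 : 0 <= D ^+ 2 * (p w * Q - P * q w) ^+ 2 by rewrite mulr_ge0 ?sqr_ge0.
  by rewrite -subr_ge0; apply: le_trans sq0 _; rewrite le_eqVlt; apply/orP; left; apply/eqP; ring.
have cross : 2 * (a w * A) <= D * (p w * Q + P * q w).
  have r0 : 0 <= D * (p w * Q + P * q w) by rewrite mulr_ge0 // addr_ge0 // mulr_ge0.
  have l0 : 0 <= 2 * (a w * A) by rewrite mulr_ge0 // mulr_ge0.
  rewrite -(ler_pXn2r (_ : (0 < 2)%N)) ?nnegrE //.
  by apply: le_trans amgm; rewrite exprMn; nra.
nra.
Qed.

Local Notation C := R[i].

Lemma sqr_norm_sum_le_mul_sum (I : Type) (W : seq I) (z P Q : I -> C) (D : R) :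
  0 <= D -> (forall w, 0 <= P w /\ 0 <= Q w) ->
  (forall w, `|z w| ^+ 2 <= D%:C * P w * Q w) ->
  `|\sum_(w <- W) z w| ^+ 2 <= D%:C * (\sum_(w <- W) P w) * (\sum_(w <- W) Q w).
Proof.
move=> D0 hpos hb.
pose a w := complex.Re `|z w|; pose p w := complex.Re (P w); pose q w := complex.Re (Q w).
have ReE (x : C) : 0 <= x -> (complex.Re x)%:C = x by move=> h; rewrite RRe_real // ger0_real.
have aE w : (a w)%:C = `|z w| by rewrite ReE.
have pE w : (p w)%:C = P w by rewrite ReE //; case: (hpos w).
have qE w : (q w)%:C = Q w by rewrite ReE //; case: (hpos w).
have apq0 w : [/\ 0 <= a w, 0 <= p w & 0 <= q w].
  case: (hpos w); rewrite -pE -qE !ler0c => -> ->.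
  by have := normr_ge0 (z w); rewrite -aE ler0c => ->.
have apq_le w : a w ^+ 2 <= D * p w * q w.
  by have := hb w; rewrite -aE -pE -qE -rmorphXn -!rmorphM lecR.
have sumE f g : (forall w, (f w)%:C = g w) ->
    (\sum_(w <- W) f w)%:C = \sum_(w <- W) g w :> C.
  by move=> fg; rewrite rmorph_sum; apply: eq_bigr => w _; exact: fg.
apply: (@le_trans _ _ ((\sum_(w <- W) `|z w|) ^+ 2)).
  by rewrite lerXn2r ?nnegrE ?ler_norm_sum // sumr_ge0.
rewrite -(sumE _ _ aE) -(sumE _ _ pE) -(sumE _ _ qE) -rmorphXn -!rmorphM lecR.
exact: sqr_sum_le_mul_sum.
Qed.

End CauchySchwarz.

Lemma bounded_by_nth (R : realType) (G : eqType) (x0 : G) (A : G -> G -> R[i]) d (S : seq G) :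
  bounded_by A d -> uniq S ->
  forall x y : 'I_(size S) -> R[i],
  `|\sum_(i < size S) \sum_(j < size S) y i * A (nth x0 S i) (nth x0 S j) * x j| ^+ 2
  <= (d ^+ 2)%:C * (\sum_(j < size S) `|x j| ^+ 2) * (\sum_(i < size S) `|y i| ^+ 2).
Proof.
move=> HA uS x y.
pose lift (f : 'I_(size S) -> R[i]) s := oapp f 0 (insub (index s S) : option 'I_(size S)).
have liftE f (i : 'I_(size S)) : lift f (nth x0 S i) = f i.
  by rewrite /lift index_uniq // valK.
have := HA S uS (lift x) (lift y).
rewrite !(big_seq_nth x0); under eq_bigr => i _ do rewrite (big_seq_nth x0).
have liftS f : \sum_(i < size S) `|lift f (nth x0 S i)| ^+ 2 = \sum_(i < size S) `|f i| ^+ 2.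
  by apply: eq_bigr => i _; rewrite liftE.
rewrite !liftS; under eq_bigr => i _ do under eq_bigr => j _ do rewrite !liftE.
by [].
Qed.

Section SchurAmplification.
Variable R : realType.
Local Notation C := R[i].

Definition l2norm {n} (f : 'I_n -> C) : C := sqrtC (\sum_(i < n) `|f i| ^+ 2).

Lemma l2norm_ge0 n (f : 'I_n -> C) : 0 <= l2norm f.
Proof. by rewrite sqrtC_ge0 sumr_ge0 // => i _; rewrite exprn_ge0. Qed.

Lemma sqr_norm_l2norm n (f : 'I_n -> C) : `|l2norm f| ^+ 2 = \sum_(i < n) `|f i| ^+ 2.
Proof. by rewrite ger0_norm ?l2norm_ge0 // sqrtCK. Qed.

(* Also true when [l2norm f = 0], since then every [f i] vanishes. *)
Lemma l2norm_divK n (f : 'I_n -> C) i : l2norm f * (l2norm f)^-1 * f i = f i.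
Proof.
have [/eqP|nz] := eqVneq (l2norm f) 0; last by rewrite mulfV // mul1r.
rewrite sqrtC_eq0 => /eqP sum0.
have : `|f i| ^+ 2 = 0 by apply: (psumr_eq0P _ sum0) => // j _; rewrite exprn_ge0.
by move/eqP; rewrite expf_eq0 /= normr_eq0 => /eqP ->; rewrite mulr0.
Qed.

Lemma sum_sqr_norm_div_l2norm n (f : 'I_n -> C) (v : C) :
  \sum_(j < n) `|v * f j / l2norm f| ^+ 2 <= `|v| ^+ 2.
Proof.
have -> : \sum_(j < n) `|v * f j / l2norm f| ^+ 2 =
    `|v| ^+ 2 * ((\sum_(j < n) `|f j| ^+ 2) / `|l2norm f| ^+ 2).
  rewrite mulr_suml mulr_sumr; apply: eq_bigr => j _.
  by rewrite !normrM normfV !exprMn exprVn mulrA.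
rewrite sqr_norm_l2norm.
have [->|nz] := eqVneq (\sum_(j < n) `|f j| ^+ 2) 0; last by rewrite mulfV // mulr1.
by rewrite mul0r mulr0 exprn_ge0.
Qed.

Variable G : eqType.
Variables (n : nat) (T : 'I_n -> 'I_n -> G -> G -> C) (xi eta : 'I_n -> G -> C).

Definition compress (s t : G) : C :=
  \sum_(i < n) \sum_(j < n) eta i s * T i j s t * xi j t
    / (l2norm (eta^~ s) * l2norm (xi^~ t)).

Lemma compress_bounded d : mx_bounded_by T d -> bounded_by compress d.
Proof.
move=> HT S uS v u.
have := HT S uS (fun j t => v t * xi j t / l2norm (xi^~ t))
  (fun i s => u s * eta i s / l2norm (eta^~ s)).
have -> : \sum_(i < n) \sum_(j < n) \sum_(s <- S) \sum_(t <- S)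
      u s * eta i s / l2norm (eta^~ s) * T i j s t * (v t * xi j t / l2norm (xi^~ t))
    = \sum_(s <- S) \sum_(t <- S) u s * compress s t * v t.
  rewrite -exchange_big_pair; apply: eq_bigr => s _; apply: eq_bigr => t _.
  rewrite /compress mulr_sumr mulr_suml; apply: eq_bigr => i _.
  rewrite mulr_sumr mulr_suml; apply: eq_bigr => j _.
  rewrite invfM; ring.
move/le_trans; apply.
have sq_ge0 (a : R) : 0 <= (a ^+ 2)%:C :> C by rewrite ler0c sqr_ge0.
have nsum_ge0 (F : 'I_n -> G -> C) : 0 <= \sum_(i < n) \sum_(s <- S) `|F i s| ^+ 2.
  by do 2 (apply: sumr_ge0 => ? _); rewrite exprn_ge0.
apply: ler_pM; rewrite ?mulr_ge0 ?sq_ge0 ?nsum_ge0 //.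
  apply: ler_wpM2l; rewrite ?sq_ge0 // exchange_big /=.
  by apply: ler_sum => t _; exact: sum_sqr_norm_div_l2norm.
by rewrite exchange_big /=; apply: ler_sum => s _; exact: sum_sqr_norm_div_l2norm.
Qed.

End SchurAmplification.

Lemma schur_bound_block (R : realType) (G : eqType) (K : G -> G -> R[i]) c :
  schur_bound K c -> forall n (T : 'I_n -> 'I_n -> G -> G -> R[i]) d,
  mx_bounded_by T d -> mx_bounded_by (fun i j s t => K s t * T i j s t) (c * d).
Proof.
move=> [_ HK] n T d HT S uS xi eta.
have := HK _ d (compress_bounded xi eta HT) S uS (fun t => l2norm (xi^~ t))
  (fun s => l2norm (eta^~ s)).
have sum_sqr_l2norm (F : 'I_n -> G -> R[i]) :
    \sum_(s <- S) `|l2norm (F^~ s)| ^+ 2 = \sum_(i < n) \sum_(s <- S) `|F i s| ^+ 2.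
  by rewrite exchange_big /=; apply: eq_bigr => s _; rewrite sqr_norm_l2norm.
rewrite !sum_sqr_l2norm; congr (`|_| ^+ 2 <= _).
rewrite -exchange_big_pair; apply: eq_bigr => s _; apply: eq_bigr => t _.
rewrite /schur_mult /compress !(mulr_sumr, mulr_suml); apply: eq_bigr => i _.
rewrite !(mulr_sumr, mulr_suml); apply: eq_bigr => j _.
rewrite -{2}(l2norm_divK (eta^~ s) i) -{2}(l2norm_divK (xi^~ t) j) invfM; ring.
Qed.

Section TwistedGroupAlgebra.
Variable R : realType.
Local Notation C := R[i].
Variables (G : eqType) (mul : G -> G -> G) (inv : G -> G) (e : G).
Hypothesis HG : is_group mul inv e.

Lemma mulgA x y z : mul x (mul y z) = mul (mul x y) z. Proof. by case: HG. Qed.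
Lemma mul1g x : mul e x = x. Proof. by case: HG. Qed.
Lemma mulg1 x : mul x e = x. Proof. by case: HG. Qed.
Lemma mulVg x : mul (inv x) x = e. Proof. by case: HG. Qed.
Lemma mulgV x : mul x (inv x) = e. Proof. by case: HG. Qed.
Lemma mulKg a x : mul (inv a) (mul a x) = x. Proof. by rewrite mulgA mulVg mul1g. Qed.
Lemma mulKVg a x : mul a (mul (inv a) x) = x. Proof. by rewrite mulgA mulgV mul1g. Qed.
Lemma mulgVK x y : mul (mul x (inv y)) y = x. Proof. by rewrite -mulgA mulVg mulg1. Qed.

Lemma mulg_inj a : injective (mul a).
Proof. by move=> x y h; rewrite -(mulKg a x) h mulKg. Qed.

Lemma eq_mul_divg s g t : (s == mul g t) = (g == mul s (inv t)).
Proof. by apply/eqP/eqP => ->; rewrite ?mulgVK // -mulgA mulgV mulg1. Qed.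

Lemma tg_entry_Mphi (sigma : G -> G -> C) phi x :
  tg_entry mul sigma (Mphi phi x) = schur_mult (K_of mul inv phi) (tg_entry mul sigma x).
Proof.
apply: funext => s; apply: funext => t.
rewrite /schur_mult /tg_entry /Mphi big_map mulr_sumr; apply: eq_bigr => p _ /=.
rewrite /lam_entry; case: ifP => h; last by rewrite !mulr0.
by move: h; rewrite eq_mul_divg /K_of => /eqP <-; ring.
Qed.

Lemma big_translate (S W : seq G) (a : G) (F : G -> C) : uniq S -> uniq W ->
  {subset [seq mul (inv a) v | v <- S] <= W} ->
  \sum_(v <- S) F v = \sum_(w <- W) (if mul a w \in S then F (mul a w) else 0).
Proof.
move=> uS uW SW.
rewrite -[RHS]big_mkcond /= -[RHS]big_filter.
rewrite (_ : \sum_(w <- [seq w <- W | mul a w \in S]) F (mul a w) =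
   \sum_(v <- [seq mul a w | w <- [seq w <- W | mul a w \in S]]) F v); last by rewrite big_map.
apply: perm_big; apply: uniq_perm => //.
  by rewrite map_inj_uniq ?filter_uniq //; apply: mulg_inj.
move=> v; apply/idP/mapP => [vS|[w]]; last by rewrite mem_filter => /andP[? _] ->.
by exists (mul (inv a) v); rewrite ?mem_filter ?mulKVg ?vS ?SW ?map_f.
Qed.




Section Cocycle.
Variable sigma : G -> G -> C.
Hypothesis Hsigma : is_norm_cocycle mul e sigma.

Lemma cocycle_mul_conj x y : sigma x y * (sigma x y)^* = 1.
Proof. by case: Hsigma => norm1 _ _ _; rewrite -normCK norm1 expr1n. Qed.

Lemma cocycle_conj_shift si sj w :
  (sigma (mul si (inv sj)) sj)^* * sigma (mul si (inv sj)) (mul sj w) =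
  sigma si w * (sigma sj w)^*.
Proof.
case: Hsigma => _ coc _ _; set g := mul si (inv sj).
have := coc g sj w; rewrite /g mulgVK -/g => hc.
rewrite -[LHS]mulr1 -(cocycle_mul_conj sj w).
transitivity ((sigma g sj)^* * (sigma sj w * sigma g (mul sj w)) * (sigma sj w)^*); first ring.
rewrite -hc.
transitivity ((sigma g sj * (sigma g sj)^*) * sigma si w * (sigma sj w)^*); first ring.
by rewrite cocycle_mul_conj mul1r.
Qed.

Variables (A : G -> G -> C) (S : seq G).
Local Notation n := (size S).
Local Notation s_ i := (nth e S i).

(* [(A (s_i, s_j) conj(sigma(s_i s_j^-1, s_j)) Lambda_sigma(s_i s_j^-1))_(i,j)], the phase
   making its [(s_i, s_j)] entry exactly [A (s_i, s_j)]. *)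
Definition twisted_block (i j : 'I_n) : tgelt R G :=
  [:: (A (s_ i) (s_ j) * (sigma (mul (s_ i) (inv (s_ j))) (s_ j))^*, mul (s_ i) (inv (s_ j)))].

Lemma twisted_block_entry i j u v :
  tg_entry mul sigma (twisted_block i j) u v =
  if u == mul (mul (s_ i) (inv (s_ j))) v then
    A (s_ i) (s_ j) * (sigma (mul (s_ i) (inv (s_ j))) (s_ j))^*
      * sigma (mul (s_ i) (inv (s_ j))) v
  else 0.
Proof.
by rewrite /tg_entry big_cons big_nil addr0 /lam_entry /=; case: ifP; rewrite ?mulr0.
Qed.

Lemma twisted_block_diag i j :
  tg_entry mul sigma (twisted_block i j) (s_ i) (s_ j) = A (s_ i) (s_ j).
Proof. by rewrite twisted_block_entry mulgVK eqxx -mulrA (mulrC _^*) cocycle_mul_conj mulr1. Qed.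

Section Pairing.
Variables (S' W : seq G) (xi eta : 'I_n -> G -> C).
Hypotheses (uS' : uniq S') (uW : uniq W).
Hypothesis S'W : forall j : 'I_n, {subset [seq mul (inv (s_ j)) v | v <- S'] <= W}.

(* Substituting [u = s_i w], [v = s_j w] decouples the pairing with the twisted block over
   [w]; by [cocycle_conj_shift] the phases then only depend on [(s_i, w)] and [(s_j, w)]. *)
Definition coset_vec (f : 'I_n -> G -> C) (tw : G -> G -> C) (w : G) (i : 'I_n) : C :=
  if mul (s_ i) w \in S' then tw (s_ i) w * f i (mul (s_ i) w) else 0.

Let a w := coset_vec xi (fun x y => (sigma x y)^*) w.
Let b w := coset_vec eta sigma w.

Lemma sum_sqr_coset_vec f tw : (forall x y, `|tw x y| = 1) ->
  \sum_(w <- W) \sum_(i < n) `|coset_vec f tw w i| ^+ 2 =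
  \sum_(i < n) \sum_(v <- S') `|f i v| ^+ 2.
Proof.
move=> tw1; rewrite exchange_big /=; apply: eq_bigr => i _.
rewrite (big_translate _ uS' uW (S'W (j:=i))); apply: eq_bigr => w _.
by rewrite /coset_vec; case: ifP; rewrite ?normr0 ?expr0n // normrM tw1 mul1r.
Qed.

Lemma twisted_block_pairing :
  \sum_(i < n) \sum_(j < n) \sum_(u <- S') \sum_(v <- S')
      eta i u * tg_entry mul sigma (twisted_block i j) u v * xi j v
  = \sum_(w <- W) \sum_(i < n) \sum_(j < n) b w i * A (s_ i) (s_ j) * a w j.
Proof.
transitivity (\sum_(i < n) \sum_(j < n) \sum_(w <- W) b w i * A (s_ i) (s_ j) * a w j);
  last by under eq_bigr => i _ do rewrite exchange_big /=; rewrite exchange_big.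
apply: eq_bigr => i _; apply: eq_bigr => j _; rewrite exchange_big /=.
set g := mul (s_ i) (inv (s_ j)); set c := A (s_ i) (s_ j) * (sigma g (s_ j))^*.
transitivity (\sum_(v <- S')
    (if mul g v \in S' then eta i (mul g v) * c * sigma g v * xi j v else 0)).
  apply: eq_bigr => v _.
  rewrite (eq_bigr (fun u => if u == mul g v then eta i u * c * sigma g v * xi j v else 0)).
    by rewrite big_pick.
  by move=> u _; rewrite twisted_block_entry -/g -/c; case: eqP; rewrite ?mulr0 ?mul0r // mulrA.
rewrite (big_translate _ uS' uW (S'W (j:=j))); apply: eq_bigr => w _.
have gsw : mul g (mul (s_ j) w) = mul (s_ i) w by rewrite /g -mulgA mulKg.
rewrite gsw /a /b /coset_vec.
case: (mul (s_ j) w \in S'); case: (mul (s_ i) w \in S'); rewrite ?mulr0 ?mul0r //.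
transitivity (eta i (mul (s_ i) w) * A (s_ i) (s_ j) *
  ((sigma g (s_ j))^* * sigma g (mul (s_ j) w)) * xi j (mul (s_ j) w)); first by rewrite /c; ring.
by rewrite /g cocycle_conj_shift; ring.
Qed.
End Pairing.

Lemma twisted_block_bounded d : uniq S -> bounded_by A d ->
  mx_bounded_by (fun i j => tg_entry mul sigma (twisted_block i j)) d.
Proof.
move=> uS HA S' uS' xi eta.
pose W := undup (flatten [seq [seq mul (inv (s_ j)) v | v <- S'] | j : 'I_n <- enum 'I_n]).
have S'W (j : 'I_n) : {subset [seq mul (inv (s_ j)) v | v <- S'] <= W}.
  move=> w wS; rewrite mem_undup; apply/flattenP; exists [seq mul (inv (s_ j)) v | v <- S'] => //.
  by apply/mapP; exists j; rewrite ?mem_enum.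
have [norm1 _ _ _] := Hsigma.
have conj_norm1 x y : `|(sigma x y)^*| = 1 by rewrite norm_conjC.
rewrite (twisted_block_pairing xi eta uS' (undup_uniq _) S'W).
rewrite -(sum_sqr_coset_vec uS' (undup_uniq _) S'W eta norm1).
rewrite -(sum_sqr_coset_vec uS' (undup_uniq _) S'W xi conj_norm1).
apply: sqr_norm_sum_le_mul_sum; first by rewrite sqr_ge0.
  by move=> w; split; apply: sumr_ge0 => k _; rewrite exprn_ge0.
by move=> w; exact: (bounded_by_nth e).
Qed.

End Cocycle.
End TwistedGroupAlgebra.

Section Multipliers.
Variable R : realType.
Local Notation C := R[i].
Variables (G : eqType) (mul : G -> G -> G) (inv : G -> G) (e : G).
Hypothesis HG : is_group mul inv e.
Variables (sigma : G -> G -> C) (phi : G -> C).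

Lemma schur_bound_cb_bound c : schur_bound (K_of mul inv phi) c -> cb_bound mul sigma phi c.
Proof.
move=> hK; split; first by case: hK.
move=> n X d /(schur_bound_block hK).
suff -> : (fun i j => tg_entry mul sigma (Mphi phi (X i j))) =
  (fun i j => schur_mult (K_of mul inv phi) (tg_entry mul sigma (X i j))) by [].
by apply: funext => i; apply: funext => j; rewrite (tg_entry_Mphi HG).
Qed.

Lemma cb_bound_schur_bound c : is_norm_cocycle mul e sigma ->
  cb_bound mul sigma phi c -> schur_bound (K_of mul inv phi) c.
Proof.
move=> Hsigma [c0 Hc]; split=> // A d HA S uS xi eta.
pose n := size S; pose diag (f : G -> C) (j : 'I_n) v := if v == nth e S j then f v else 0.
have := Hc n _ d (twisted_block_bounded HG Hsigma uS HA) S uS (diag xi) (diag eta).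
have sum_sqr_diag f : \sum_(j < n) \sum_(v <- S) `|diag f j v| ^+ 2 = \sum_(t <- S) `|f t| ^+ 2.
  rewrite [RHS](big_seq_nth e); apply: eq_bigr => j _.
  under eq_bigr => v _ do rewrite (fun_if (fun x => `|x| ^+ 2)) normr0 expr0n.
  by rewrite big_pick // mem_nth.
rewrite !sum_sqr_diag; congr (`|_| ^+ 2 <= _).
rewrite [RHS](big_seq_nth e); under [RHS]eq_bigr => i _ do rewrite (big_seq_nth e).
apply: eq_bigr => i _; apply: eq_bigr => j _.
rewrite (eq_bigr (fun u => \sum_(v <- S) (if u == nth e S i then (if v == nth e S j then
    eta u * tg_entry mul sigma (Mphi phi (twisted_block mul inv e sigma A i j)) u v * xi v
    else 0) else 0))); last by move=> u _; apply: eq_bigr => v _; rewrite /diag;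
  do 2 case: eqP => _; rewrite ?mul0r ?mulr0.
by rewrite big_pick2 ?mem_nth // (tg_entry_Mphi HG) /schur_mult (twisted_block_diag HG Hsigma).
Qed.

Lemma cb_boundE : is_norm_cocycle mul e sigma ->
  cb_bound mul sigma phi = schur_bound (K_of mul inv phi).
Proof.
move=> Hsigma; apply: funext => c; apply: propext; split.
  exact: cb_bound_schur_bound.
exact: schur_bound_cb_bound.
Qed.

Lemma M0A_schur_multiplier : is_norm_cocycle mul e sigma ->
  M0A mul sigma phi <-> is_schur_multiplier (K_of mul inv phi).
Proof.
move=> Hsigma; rewrite /M0A (cb_boundE Hsigma); split=> [[_ //]|[c hK]].
split; last by exists c.
by exists c => x d hx; rewrite (tg_entry_Mphi HG); case: hK => _; apply.
Qed.

End Multipliers.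

Lemma trivial_cocycle_norm (R : realType) (G : eqType) (mul : G -> G -> G) (e : G) :
  is_norm_cocycle mul e (@trivial_cocycle R G).
Proof. by split => *; rewrite /trivial_cocycle ?normr1 ?mulr1. Qed.

Theorem proposition4p3 (R : realType) (G : eqType) (mul : G -> G -> G)
    (inv : G -> G) (e : G) (HG : is_group mul inv e)
    (sigma : G -> G -> R[i]) (Hsigma : is_norm_cocycle mul e sigma)
    (phi : G -> R[i]) :
  (M0A mul sigma phi <-> M0A mul (@trivial_cocycle R G) phi) /\
  (M0A mul sigma phi <-> is_schur_multiplier (K_of mul inv phi)) /\
  (M0A mul sigma phi ->
     cb_norm mul sigma phi = cb_norm mul (@trivial_cocycle R G) phi /\
     cb_norm mul sigma phi = schur_norm (K_of mul inv phi)).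
Proof.
have triv := trivial_cocycle_norm R mul e.
have schur := M0A_schur_multiplier HG phi Hsigma.
rewrite /cb_norm /schur_norm (cb_boundE HG phi Hsigma) (cb_boundE HG phi triv).
by rewrite schur (M0A_schur_multiplier HG phi triv).
Qed.
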